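(* Let $\mathcal{C}$ be a prevariety over a finite alphabet $A$ and let $\alpha:A^*\to M$ be an $\mathit{SF}(\mathcal{C})$-morphism. There exists a $\mathcal{C}$-morphism $\eta:A^*\to N$ such that for every $u\in A^*$, if $\eta(u)$ is idempotent, then $(\alpha(u))^{\omega+1}=(\alpha(u))^{\omega}$.
   Context: Fix a finite alphabet $A$. A prevariety is a class of regular languages over $A$ containing $\emptyset$ and $A^*$, closed under union, intersection, complement, and under the quotients $u^{-1}L=\{w\mid uw\in L\}$ and $Lu^{-1}=\{w\mid wu\in L\}$. $\mathit{SF}(\mathcal{C})$ is the least class containing $\mathcal{C}$ and all $\{a\}$ ($a\in A$), closed under union, complement and concatenation. For a class $\mathcal{D}$, a $\mathcal{D}$-morphism is a surjective monoid morphism $\eta:A^*\to N$ onto a finite monoid $N$ such that every language $\eta^{-1}(F)$, $F\subseteq N$, belongs to $\mathcal{D}$. For a finite monoid $M$, $\omega$ denotes a positive integer such that $s^\omega$ is idempotent for every $s\in M$. *)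

From mathcomp Require Import all_boot.
Set Implicit Arguments. Unset Strict Implicit. Unset Printing Implicit Defensive.

Section Lang.
Variable A : finType.
Definition lang := seq A -> bool.
Definition lclass := lang -> Prop.

Definition regular (L : lang) : Prop :=
  exists (Q : finType) (q0 : Q) (delta : Q -> A -> Q) (F : pred Q),
    forall w, L w = F (foldl delta q0 w).

Definition lempty : lang := fun _ => false.
Definition lfull : lang := fun _ => true.
Definition lunion (L1 L2 : lang) : lang := fun w => L1 w || L2 w.
Definition linter (L1 L2 : lang) : lang := fun w => L1 w && L2 w.
Definition lcompl (L : lang) : lang := fun w => ~~ L w.
Definition lquotl (u : seq A) (L : lang) : lang := fun w => L (u ++ w).
Definition lquotr (L : lang) (u : seq A) : lang := fun w => L (w ++ u).
Definition lletter (a : A) : lang := fun w => w == [:: a].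
Definition lconcat (L1 L2 : lang) : lang :=
  fun w => [exists i : 'I_(size w).+1, L1 (take i w) && L2 (drop i w)].

Definition prevariety (C : lclass) : Prop :=
  (forall L, C L -> regular L) /\
  C lempty /\ C lfull /\
  (forall L1 L2, C L1 -> C L2 -> C (lunion L1 L2)) /\
  (forall L1 L2, C L1 -> C L2 -> C (linter L1 L2)) /\
  (forall L, C L -> C (lcompl L)) /\
  (forall u L, C L -> C (lquotl u L) /\ C (lquotr L u)).

Inductive SF (C : lclass) : lclass :=
  | SF_base L : C L -> SF C L
  | SF_letter a : SF C (lletter a)
  | SF_union L1 L2 : SF C L1 -> SF C L2 -> SF C (lunion L1 L2)
  | SF_compl L : SF C L -> SF C (lcompl L)
  | SF_concat L1 L2 : SF C L1 -> SF C L2 -> SF C (lconcat L1 L2).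

Definition monoid_laws (M : finType) (mul : M -> M -> M) (one : M) : Prop :=
  [/\ associative mul, left_id one mul & right_id one mul].

Definition mpow (M : Type) (mul : M -> M -> M) (one : M) (s : M) (n : nat) : M :=
  iter n (mul s) one.

Definition is_morphism_of (D : lclass) (M : finType) (mul : M -> M -> M)
    (one : M) (f : seq A -> M) : Prop :=
  [/\ f [::] = one,
      (forall u v, f (u ++ v) = mul (f u) (f v)),
      (forall m : M, exists w, f w = m) &
      (forall F : {set M}, D (fun w => f w \in F))].
End Lang.

From mathcomp Require Import all_boot zify boolp.
Set Implicit Arguments. Unset Strict Implicit. Unset Printing Implicit Defensive.

(* Call L k-stable on u when membership of x u^a y in L does not depend on
   a >= k.  Every L in SF(C) admits a congruence ~ of finite index with
   classes in C and a k such that L is k-stable on every u with uu ~ u: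
   for L in C take the syntactic congruence of L (its classes are boolean
   combinations of quotients of L) and k = 1; letters are 2-stable on every
   u; union, complement and concatenation are handled by intersecting the
   congruences, and for a concatenation w1 w2 = x u^a y with a large, one
   of the factors contains a long block of u's, which can be pumped.
   Applying this to the finitely many languages alpha^-1(m) with a common k,
   and letting eta be the quotient map of the common congruence, idempotency
   of eta(u) gives alpha(u)^(k+1) = alpha(u)^k, hence
   alpha(u)^(omega+1) = alpha(u)^omega. *)

Section Words.
Variable A : Type.
Implicit Types u x y w : seq A.

Definition wpow u n : seq A := iter n (cat u) [::].

Lemma wpowS u n : wpow u n.+1 = u ++ wpow u n.
Proof. by []. Qed.

Lemma wpowD u m n : wpow u (m + n) = wpow u m ++ wpow u n.
Proof. by elim: m => //= m IH; rewrite -/(wpow u (m + n)) IH catA. Qed.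

Lemma wpow_mid u i j : wpow u (i + j).+1 = wpow u i ++ u ++ wpow u j.
Proof. by rewrite -addnS wpowD. Qed.

Lemma wpow_nil n : wpow [::] n = [::].
Proof. by elim: n. Qed.

Lemma size_wpow u n : size (wpow u n) = n * size u.
Proof. by elim: n => //= n IH; rewrite size_cat -/(wpow u n) IH mulSn. Qed.

Lemma cat_eq_cat x1 x2 y1 y2 : x1 ++ x2 = y1 ++ y2 ->
  (exists m, y1 = x1 ++ m /\ x2 = m ++ y2) \/
  (exists m, x1 = y1 ++ m /\ y2 = m ++ x2).
Proof.
elim: x1 y1 => [|a x1 IH] [|b y1] /=.
- by move=> ->; left; exists [::].
- by move=> ->; left; exists (b :: y1).
- by move=> <-; right; exists (a :: x1).
by case=> -> /IH [] [m [-> ->]]; [left | right]; exists m.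
Qed.

Lemma wpow_cat_split u n x1 x2 : 0 < n -> x1 ++ x2 = wpow u n ->
  exists i j u1 u2, [/\ (i + j).+1 = n, u = u1 ++ u2,
                        x1 = wpow u i ++ u1 & x2 = u2 ++ wpow u j].
Proof.
elim: n x1 x2 => // n IH x1 x2 _; rewrite wpowS.
case/cat_eq_cat => -[m [Eu Ex]].
  by exists 0, n, x1, m.
case: n IH Ex => [_|n IH] Ex.
  case: m x2 Eu Ex => [|? ?] [|? ?] // -> _.
  by exists 0, 0, u, [::]; rewrite cats0.
have [i [j [u1 [u2 [<- Eu12 Em ->]]]]] := IH _ _ isT (esym Ex).
by exists i.+1, j, u1, u2; rewrite Eu Em catA.
Qed.

Lemma cat_wpow_split u a x y w1 w2 : 0 < a ->
  x ++ wpow u a ++ y = w1 ++ w2 ->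
  [\/ exists m, x = w1 ++ m /\ w2 = m ++ wpow u a ++ y,
      exists i j u1 u2, [/\ (i + j).+1 = a, u = u1 ++ u2,
        w1 = x ++ wpow u i ++ u1 & w2 = u2 ++ wpow u j ++ y]
    | exists m, w1 = x ++ wpow u a ++ m /\ y = m ++ w2].
Proof.
move=> a_gt0 /esym /cat_eq_cat [[m [-> ->]]|[r [-> /esym]]].
  by constructor 1; exists m.
case/cat_eq_cat => -[m [Ewpow ->]].
  have [i [j [u1 [u2 [Ea Eu -> ->]]]]] := wpow_cat_split a_gt0 (esym Ewpow).
  by constructor 2; exists i, j, u1, u2; rewrite !catA.
by constructor 3; exists m; rewrite Ewpow catA.
Qed.

Definition cat_compatible (T : Type) (f : seq A -> T) : Prop :=
  forall u u' v, f u = f u' -> f (v ++ u) = f (v ++ u') /\ f (u ++ v) = f (u' ++ v).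

Lemma pair_compatible (T1 T2 : Type) (f1 : seq A -> T1) (f2 : seq A -> T2) :
  cat_compatible f1 -> cat_compatible f2 -> cat_compatible (fun w => (f1 w, f2 w)).
Proof.
by move=> f1C f2C u u' v [/(f1C _ _ v) [-> ->] /(f2C _ _ v) [-> ->]].
Qed.

End Words.

Section Stability.
Variable A : finType.
Implicit Types (L : lang A) (u x y w : seq A).

Definition lstable L k u : Prop :=
  forall a b x y, k <= a -> k <= b ->
    L (x ++ wpow u a ++ y) -> L (x ++ wpow u b ++ y).

Lemma lstable_le L k k' u : k <= k' -> lstable L k u -> lstable L k' u.
Proof. by move=> le_kk' st a b x y ? ?; apply: st; apply: leq_trans le_kk' _. Qed.

Lemma lstable_eq L k u a b x y : lstable L k u -> k <= a -> k <= b ->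
  L (x ++ wpow u a ++ y) = L (x ++ wpow u b ++ y).
Proof. by move=> st ? ?; apply/idP/idP; apply: st. Qed.

Lemma lstable_compl L k u : lstable L k u -> lstable (lcompl L) k u.
Proof. by move=> st a b x y ka kb; rewrite /lcompl (lstable_eq x y st ka kb). Qed.

Lemma lstable_union L1 L2 k1 k2 u : lstable L1 k1 u -> lstable L2 k2 u ->
  lstable (lunion L1 L2) (maxn k1 k2) u.
Proof.
move=> st1 st2 a b x y; rewrite !geq_max => /andP [k1a k2a] /andP [k1b k2b].
by case/orP=> [/(st1 a b) | /(st2 a b)] h; apply/orP; [left; apply: h | right; apply: h].
Qed.

Lemma lstable_letter c u : lstable (lletter c) 2 u.
Proof.
move=> a b x y a_ge2 _; case: u => [|z u]; first by rewrite !wpow_nil.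
by move=> /eqP /(congr1 size); rewrite !size_cat size_wpow /=; nia.
Qed.

Lemma lconcatP L1 L2 w :
  reflect (exists w1 w2, [/\ w = w1 ++ w2, L1 w1 & L2 w2]) (lconcat L1 L2 w).
Proof.
apply: (iffP existsP) => [[i /andP [h1 h2]] | [w1 [w2 [-> h1 h2]]]].
  by exists (take i w), (drop i w); rewrite cat_take_drop.
have lt_w1 : size w1 < (size (w1 ++ w2)).+1 by rewrite ltnS size_cat leq_addr.
by exists (Ordinal lt_w1); rewrite /= take_size_cat // drop_size_cat // h1 h2.
Qed.

Lemma lconcat_wpow_mid L1 L2 k1 k2 u u1 u2 x y i j b :
  lstable L1 k1 u -> lstable L2 k2 u -> u = u1 ++ u2 ->
  k1 + k2 < (i + j).+1 -> k1 + k2 < b ->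
  L1 (x ++ wpow u i ++ u1) -> L2 (u2 ++ wpow u j ++ y) ->
  lconcat L1 L2 (x ++ wpow u b ++ y).
Proof.
move=> st1 st2 Eu ij_gt b_gt h1 h2.
have mid i' j' : L1 (x ++ wpow u i' ++ u1) -> L2 (u2 ++ wpow u j' ++ y) ->
    lconcat L1 L2 (x ++ wpow u (i' + j').+1 ++ y).
  move=> h1' h2'; apply/lconcatP; exists (x ++ wpow u i' ++ u1), (u2 ++ wpow u j' ++ y).
  by rewrite wpow_mid {2}Eu -!catA.
have [j_lt | j_ge] := ltnP j k2.
  have -> : b = ((b - j).-1 + j).+1 by lia.
  by apply: mid h2; apply: (st1 i) h1; lia.
have [i_ge | i_lt] := leqP k1 i.
  have -> : b = (k1 + (b - k1).-1).+1 by lia.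
  by apply: mid; [apply: (st1 i) h1 | apply: (st2 j) h2]; lia.
have -> : b = (i + (b - i).-1).+1 by lia.
by apply: mid h1 _; apply: (st2 j) h2; lia.
Qed.

Lemma lstable_concat L1 L2 k1 k2 u : lstable L1 k1 u -> lstable L2 k2 u ->
  lstable (lconcat L1 L2) (k1 + k2).+1 u.
Proof.
move=> st1 st2 a b x y ka kb /lconcatP [w1 [w2 [Ew h1 h2]]].
have [[m [-> Ew2]] | [i [j [u1 [u2 [Ea Eu Ew1 Ew2]]]]] | [m [Ew1 ->]]] :=
  cat_wpow_split (leq_trans (ltn0Sn _) ka) Ew.
- apply/lconcatP; exists w1, (m ++ wpow u b ++ y); split; first by rewrite -!catA.
    exact: h1.
  by rewrite Ew2 in h2; apply: (st2 a) h2; lia.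
- rewrite Ew1 Ew2 -Ea in h1 h2 ka.
  exact: lconcat_wpow_mid st1 st2 Eu ka kb h1 h2.
apply/lconcatP; exists (x ++ wpow u b ++ m), w2; split; last exact: h2.
  by rewrite -!catA.
by rewrite Ew1 in h1; apply: (st1 a) h1; lia.
Qed.

Lemma lstable_kernel (T : Type) (f : seq A -> T) L u :
  cat_compatible f -> (forall w w', f w = f w' -> L w = L w') ->
  f (u ++ u) = f u -> lstable L 1 u.
Proof.
move=> fC fL idem_u.
have f_wpow n : f (wpow u n.+1) = f u.
  elim: n => [|n IH]; first by rewrite /= cats0.
  by rewrite wpowS (fC _ _ u IH).1.
move=> [|a] [|b] x y // _ _; rewrite (fL _ (x ++ wpow u b.+1 ++ y)) //.
by apply: (fC _ _ x (fC _ _ y _).2).1; rewrite !f_wpow.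
Qed.

End Stability.

Section Prevariety.
Variables (A : finType) (C : lclass A).
Hypothesis HC : prevariety C.
Implicit Types (L : lang A) (x y w : seq A).

Lemma prevariety_const b : C (fun _ => b).
Proof. by case: HC => _ [C0 [C1 _]]; case: b. Qed.

Lemma prevariety_all (I : Type) (s : seq I) (P : I -> lang A) :
  (forall i, C (P i)) -> C (fun w => all (fun i => P i w) s).
Proof.
case: HC => _ [_ [_ [_ [CI _]]]] CP.
by elim: s => [|i s IH]; [exact: prevariety_const | exact: CI].
Qed.

Lemma prevariety_has (I : Type) (s : seq I) (P : I -> lang A) :
  (forall i, C (P i)) -> C (fun w => has (fun i => P i w) s).
Proof.
case: HC => _ [_ [_ [CU _]]] CP.
by elim: s => [|i s IH]; [exact: prevariety_const | exact: CU].
Qed.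

Lemma prevariety_quot L x y : C L -> C (fun w => L (x ++ w ++ y)).
Proof.
case: HC => _ [_ [_ [_ [_ [_ CQ]]]]] CL.
exact: (CQ y _ (CQ x L CL).1).2.
Qed.

Lemma prevariety_eqb L b : C L -> C (fun w => L w == b).
Proof.
case: HC => _ [_ [_ [_ [_ [CN _]]]]] CL.
case: b; first by rewrite (_ : (fun w => _) = L) //; apply: funext => w; rewrite eqb_id.
by rewrite (_ : (fun w => _) = lcompl L); [exact: CN | apply: funext => w; rewrite eqbF_neg].
Qed.

Definition fibres_in (T : eqType) (f : seq A -> T) : Prop :=
  forall t, C (fun w => f w == t).

Definition idem_forced (R : seq A -> Prop) : Prop :=
  exists (T : finType) (f : seq A -> T),
    [/\ cat_compatible f, fibres_in f & forall u, f (u ++ u) = f u -> R u].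

Definition idem_stable L : Prop := exists k, idem_forced (lstable L k).

Lemma idem_forced_true (R : seq A -> Prop) : (forall u, R u) -> idem_forced R.
Proof.
move=> R_all; exists unit, (fun _ => tt); split => // -[].
exact: prevariety_const.
Qed.

Lemma idem_forced_impl (R1 R2 : seq A -> Prop) :
  (forall u, R1 u -> R2 u) -> idem_forced R1 -> idem_forced R2.
Proof. by move=> R12 [T [f [fC fF fR]]]; exists T, f; split => // u /fR /R12. Qed.

Lemma idem_forced_and (R1 R2 : seq A -> Prop) :
  idem_forced R1 -> idem_forced R2 -> idem_forced (fun u => R1 u /\ R2 u).
Proof.
move=> [T1 [f1 [f1C f1F f1R]]] [T2 [f2 [f2C f2F f2R]]].
exists (T1 * T2)%type, (fun w => (f1 w, f2 w)); split.
- exact: pair_compatible.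
- case=> t1 t2; rewrite (_ : (fun w => _) = linter (fun w => f1 w == t1) (fun w => f2 w == t2)).
    by case: HC => _ [_ [_ [_ [CI _]]]]; apply: CI.
  by apply: funext => w; rewrite /linter xpair_eqE.
- by move=> u [/f1R ? /f2R ?].
Qed.

End Prevariety.

Section SyntacticMap.
Variables (A : finType) (L : lang A).
Variables (Q : finType) (q0 : Q) (delta : Q -> A -> Q) (F : pred Q).
Hypothesis L_dfa : forall w, L w = F (foldl delta q0 w).

(* The pair (q, S) stands for the contexts (x, y) with q = q0.x and S the set
   of states from which y is accepted, so that x w y is in L iff q.w is in S;
   as there are finitely many pairs, syntactic_map w determines the syntactic
   class of w. *)
Definition context (x y : seq A) : Q * {set Q} :=
  (foldl delta q0 x, [set q | F (foldl delta q y)]).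

Definition syntactic_map (w : seq A) : {ffun Q * {set Q} -> bool} :=
  [ffun p => `[< exists x y, context x y = p >] && (foldl delta p.1 w \in p.2)].

Lemma syntactic_mapE x w y : syntactic_map w (context x y) = L (x ++ w ++ y).
Proof.
by rewrite ffunE asboolT; [rewrite inE L_dfa !foldl_cat | exists x, y].
Qed.

Lemma syntactic_map_out p w :
  ~ (exists x y, context x y = p) -> syntactic_map w p = false.
Proof. by move=> Np; rewrite ffunE asboolF. Qed.

Lemma syntactic_map_compatible : cat_compatible syntactic_map.
Proof.
move=> u u' v E; split; apply/ffunP => p;
  have [[x [y <-]] | Np] := asboolP (exists x y, context x y = p);
  try by rewrite !syntactic_map_out.
- by move/ffunP: E => /(_ (context (x ++ v) y)); rewrite !syntactic_mapE -!catA.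
- by move/ffunP: E => /(_ (context x (v ++ y))); rewrite !syntactic_mapE -!catA.
Qed.

Lemma syntactic_map_kernel w w' : syntactic_map w = syntactic_map w' -> L w = L w'.
Proof.
by move/ffunP/(_ (context [::] [::])); rewrite !syntactic_mapE !cats0.
Qed.

Lemma syntactic_map_fibres (C : lclass A) :
  prevariety C -> C L -> fibres_in C syntactic_map.
Proof.
move=> HC CL g.
rewrite (_ : (fun w => _) =
    (fun w => all (fun p => syntactic_map w p == g p) (enum {: Q * {set Q}}))).
  apply: prevariety_all => // p.
  have [[x [y <-]] | Np] := asboolP (exists x y, context x y = p).
    rewrite (_ : (fun w => _) = fun w => L (x ++ w ++ y) == g (context x y)).
      exact: (prevariety_eqb HC (g _) (prevariety_quot HC x y CL)).
    by apply: funext => w; rewrite syntactic_mapE.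
  rewrite (_ : (fun w => _) = fun _ => false == g p).
    exact: prevariety_const.
  by apply: funext => w; rewrite syntactic_map_out.
apply: funext => w; apply/eqP/allP => [<- // | Eg].
by apply/ffunP => p; apply/eqP/Eg; rewrite mem_enum.
Qed.

End SyntacticMap.

Section StarFreeClosure.
Variables (A : finType) (C : lclass A).
Hypothesis HC : prevariety C.
Implicit Types L : lang A.

Lemma idem_stable_base L : C L -> idem_stable C L.
Proof.
move=> CL; have [Q [q0 [delta [F L_dfa]]]] := HC.1 L CL.
exists 1, _, (syntactic_map q0 delta F); split.
- exact: syntactic_map_compatible.
- exact: syntactic_map_fibres.
- move=> u; apply: lstable_kernel; first exact: syntactic_map_compatible.
  exact: syntactic_map_kernel.
Qed.

Lemma idem_stable_letter c : idem_stable C (lletter c).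
Proof. by exists 2; apply: idem_forced_true => // u; apply: lstable_letter. Qed.

Lemma idem_stable_union L1 L2 :
  idem_stable C L1 -> idem_stable C L2 -> idem_stable C (lunion L1 L2).
Proof.
move=> [k1 st1] [k2 st2]; exists (maxn k1 k2).
apply: idem_forced_impl (idem_forced_and HC st1 st2) => u [].
exact: lstable_union.
Qed.

Lemma idem_stable_compl L : idem_stable C L -> idem_stable C (lcompl L).
Proof.
by move=> [k st]; exists k; apply: idem_forced_impl st => u; apply: lstable_compl.
Qed.

Lemma idem_stable_concat L1 L2 :
  idem_stable C L1 -> idem_stable C L2 -> idem_stable C (lconcat L1 L2).
Proof.
move=> [k1 st1] [k2 st2]; exists (k1 + k2).+1.
apply: idem_forced_impl (idem_forced_and HC st1 st2) => u [].
exact: lstable_concat.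
Qed.

Lemma idem_stable_SF L : SF C L -> idem_stable C L.
Proof.
elim=> {L}.
- exact: idem_stable_base.
- exact: idem_stable_letter.
- by move=> L1 L2 _ st1 _ st2; apply: idem_stable_union.
- by move=> L _; apply: idem_stable_compl.
- by move=> L1 L2 _ st1 _ st2; apply: idem_stable_concat.
Qed.

Lemma idem_stable_family (I : finType) (P : I -> lang A) :
  (forall i, idem_stable C (P i)) ->
  exists k, idem_forced C (fun u => forall i, lstable (P i) k u).
Proof.
move=> stP.
suff [k st] : exists k, idem_forced C (fun u => forall i, i \in enum I -> lstable (P i) k u).
  by exists k; apply: idem_forced_impl st => u st_u i; apply/st_u; rewrite mem_enum.
elim: (enum I) => [|i s [k st]].
  by exists 0; apply: idem_forced_true.
have [ki sti] := stP i; exists (maxn k ki).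
apply: idem_forced_impl (idem_forced_and HC st sti) => u [st_s st_i] j.
rewrite inE => /predU1P [-> | /st_s st_j].
  exact: lstable_le (leq_maxr _ _) st_i.
exact: lstable_le (leq_maxl _ _) st_j.
Qed.

End StarFreeClosure.

Section QuotientMonoid.
Variables (A : finType) (T : finType) (f : seq A -> T).
Hypothesis fC : cat_compatible f.

Definition fimage : finType := {t : T | `[< exists w, f w = t >]}.

Definition qproj (w : seq A) : fimage := exist _ (f w) (asboolT (ex_intro _ w erefl)).

Definition qrepr (n : fimage) : seq A := sval (cid (asboolW (valP n))).

Lemma qprojK n : qproj (qrepr n) = n.
Proof. by apply: val_inj; rewrite /= /qrepr; case: cid. Qed.

Definition qmul (n1 n2 : fimage) : fimage := qproj (qrepr n1 ++ qrepr n2).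

Lemma qmul_proj u v : qmul (qproj u) (qproj v) = qproj (u ++ v).
Proof.
have repr_proj w : f (qrepr (qproj w)) = f w.
  by rewrite -[LHS]/(val (qproj (qrepr (qproj w)))) qprojK.
apply: val_inj => /=.
by rewrite (fC (qrepr (qproj v)) (repr_proj u)).2 (fC u (repr_proj v)).1.
Qed.

Lemma qmul_monoid : monoid_laws qmul (qproj [::]).
Proof.
split=> [n1 n2 n3 | n | n].
- by rewrite -[n1]qprojK -[n2]qprojK -[n3]qprojK !qmul_proj catA.
- by rewrite -[n]qprojK qmul_proj.
- by rewrite -[n]qprojK qmul_proj cats0.
Qed.

Lemma qproj_morphism (C : lclass A) :
  prevariety C -> fibres_in C f -> is_morphism_of C qmul (qproj [::]) qproj.
Proof.
move=> HC fF; split; [by [] | by move=> u v; rewrite qmul_proj | |].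
  by move=> n; exists (qrepr n); rewrite qprojK.
move=> S; rewrite (_ : (fun w => _) = fun w => has (fun n : fimage => f w == val n) (enum S)).
  by apply: (prevariety_has HC) => n; apply: fF.
apply: funext => w; apply/idP/hasP => [w_S | [n n_S /eqP E]].
  by exists (qproj w); [rewrite mem_enum | apply: eqxx].
have -> : qproj w = n by apply: val_inj.
by rewrite -mem_enum.
Qed.

End QuotientMonoid.

Section MonoidPowers.
Variables (M : finType) (mul : M -> M -> M) (one : M).
Hypothesis HM : monoid_laws mul one.
Local Notation pow := (mpow mul one).

Lemma mpowD s m n : pow s (m + n) = mul (pow s m) (pow s n).
Proof.
case: HM => mulA mul1m _.
by elim: m => [|m IH]; rewrite ?mul1m //= -/(pow s (m + n)) IH mulA.
Qed.

Lemma mpow_omega_stable omega k s : 0 < omega ->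
  mul (pow s omega) (pow s omega) = pow s omega ->
  pow s k.+1 = pow s k -> pow s omega.+1 = pow s omega.
Proof.
move=> omega_gt0 idem stab.
have stab_ge n : k <= n -> pow s n.+1 = pow s n.
  by move=> /subnK <-; rewrite -addnS !mpowD stab.
have pow_mul m : pow s (omega * m.+1) = pow s omega.
  by elim: m => [|m IH]; rewrite ?muln1 // mulnS mpowD IH idem.
have -> : pow s omega.+1 = mul s (pow s omega) by [].
rewrite -(pow_mul k); apply: stab_ge.
exact: leq_trans (leqnSn k) (leq_pmull _ omega_gt0).
Qed.

Lemma morph_wpow (A : Type) (alpha : seq A -> M) u n :
  alpha [::] = one -> (forall v w, alpha (v ++ w) = mul (alpha v) (alpha w)) ->
  alpha (wpow u n) = pow (alpha u) n.
Proof. by move=> alpha0 alphaM; elim: n => //= n <-; rewrite -alphaM. Qed.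

End MonoidPowers.

Theorem proposition3p3 (A : finType) (C : lclass A) (HC : prevariety C)
  (M : finType) (mul : M -> M -> M) (one : M) (HM : monoid_laws mul one)
  (alpha : seq A -> M) (Halpha : is_morphism_of (SF C) mul one alpha)
  (omega : nat) (Homega_pos : 0 < omega)
  (Homega : forall s : M,
     mul (mpow mul one s omega) (mpow mul one s omega) = mpow mul one s omega) :
  exists (N : finType) (nmul : N -> N -> N) (none : N) (eta : seq A -> N),
    [/\ monoid_laws nmul none,
        is_morphism_of C nmul none eta &
        forall u : seq A, nmul (eta u) (eta u) = eta u ->
          mpow mul one (alpha u) omega.+1 = mpow mul one (alpha u) omega].
Proof.
case: Halpha => alpha0 alphaM _ alphaF.
have [k [T [f [fC fF f_stable]]]] := idem_stable_family HC
  (fun m : M => idem_stable_SF HC (alphaF [set m])).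
exists (fimage f), (qmul (f := f)), (qproj f [::]), (qproj f); split.
- exact: qmul_monoid.
- exact: qproj_morphism.
move=> u; rewrite (qmul_proj fC) => /(congr1 val) idem_u.
have := f_stable u idem_u (alpha (wpow u k)) k k.+1 [::] [::] (leqnn k) (leqnSn k).
rewrite !cats0 !inE eqxx !(morph_wpow _ _ alpha0 alphaM) => /(_ isT) /eqP stab.
exact: (mpow_omega_stable HM Homega_pos (Homega _) stab).
Qed.
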